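(* Let $F=F(N,\mathcal D)$ be a connected GSC, $x\in F$, $n\ge1$, and let $\omega,\tau\in\mathcal D^n\setminus\Omega_n(x)$ be well separated by $x$. Then $\varphi_\omega(F)$ and $\varphi_\tau(F)$ lie in different connected components of $F\setminus\{x\}$; in particular $x$ is a cut point of $F$.
   Context: GSC: $N\ge2$, $\mathcal D\subset\{0,\dots,N-1\}^2$ with $1<|\mathcal D|<N^2$, $\varphi_i(x)=\frac1N(x+i)$, $F$ the attractor $F=\bigcup_{i\in\mathcal D}\varphi_i(F)$; $\varphi_{i_1\cdots i_k}=\varphi_{i_1}\circ\cdots\circ\varphi_{i_k}$. For $x\in F$ and $k\ge1$: $\Omega_k(x)=\{\mathbf i\in\mathcal D^k: x\in\varphi_{\mathbf i}(F)\}$ and $E_k(x)=\bigcup_{\mathbf j\in\mathcal D^k\setminus\Omega_k(x)}\varphi_{\mathbf j}(F)$. Two words $\omega,\tau\in\mathcal D^n\setminus\Omega_n(x)$ are well separated by $x$ if for every $p\ge1$ the sets $\varphi_\omega(F)$ and $\varphi_\tau(F)$ lie in different connected components of $E_{n+p}(x)$. *)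

From HB Require Import structures.
From mathcomp Require Import all_boot all_order all_algebra.
From mathcomp Require Import all_classical all_reals all_analysis.
Set Implicit Arguments. Unset Strict Implicit. Unset Printing Implicit Defensive.
Import Order.TTheory GRing.Theory Num.Theory.
Import numFieldNormedType.Exports.
Local Open Scope classical_set_scope.
Local Open Scope ring_scope.

Definition gsc_phi (R : realType) (N : nat) (i : 'I_N * 'I_N) (p : R * R) : R * R :=
  ((p.1 + (i.1 : nat)%:R) / N%:R, (p.2 + (i.2 : nat)%:R) / N%:R).

Fixpoint gsc_phiw (R : realType) (N : nat) (w : seq ('I_N * 'I_N)) (p : R * R) : R * R :=
  match w with
  | [::] => p
  | i :: w' => gsc_phi i (gsc_phiw w' p)
  end.

Definition gsc_word (N : nat) (D : {set 'I_N * 'I_N}) (k : nat) (w : seq ('I_N * 'I_N)) : Prop :=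
  size w = k /\ all (fun i => i \in D) w.

(* F is the attractor of the IFS {phi_i : i in D}: the (unique, by Hutchinson)
   nonempty compact set with F = \bigcup_{i in D} phi_i(F). *)
Definition gsc_attractor (R : realType) (N : nat) (D : {set 'I_N * 'I_N}) (F : set (R * R)) : Prop :=
  F !=set0 /\ compact F /\ F = \bigcup_(i in [set i | i \in D]) (gsc_phi i @` F).

Definition gsc_Omega (R : realType) (N : nat) (D : {set 'I_N * 'I_N}) (F : set (R * R))
  (k : nat) (x : R * R) : set (seq ('I_N * 'I_N)) :=
  [set w | gsc_word D k w /\ (gsc_phiw w @` F) x].

Definition gsc_E (R : realType) (N : nat) (D : {set 'I_N * 'I_N}) (F : set (R * R))
  (k : nat) (x : R * R) : set (R * R) :=
  \bigcup_(w in [set w | gsc_word D k w /\ ~ gsc_Omega D F k x w]) (gsc_phiw w @` F).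

Definition in_different_components (T : topologicalType) (E A B : set T) : Prop :=
  exists y z, [/\ A y, B z, A `<=` connected_component E y,
                  B `<=` connected_component E z &
                  connected_component E y <> connected_component E z].

Definition well_separated (R : realType) (N : nat) (D : {set 'I_N * 'I_N}) (F : set (R * R))
  (x : R * R) (n : nat) (om ta : seq ('I_N * 'I_N)) : Prop :=
  [/\ gsc_word D n om, ~ gsc_Omega D F n x om,
      gsc_word D n ta, ~ gsc_Omega D F n x ta &
      forall p : nat, (1 <= p)%N ->
        in_different_components (gsc_E D F (n + p) x)
          (gsc_phiw om @` F) (gsc_phiw ta @` F)].

From HB Require Import structures.
From mathcomp Require Import all_boot all_order all_algebra.
From mathcomp Require Import all_classical all_reals all_analysis.
From mathcomp Require Import ring lra.
Import Order.TTheory GRing.Theory Num.Theory.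
Import numFieldNormedType.Exports.
Local Open Scope classical_set_scope.
Local Open Scope ring_scope.

(* Let A be the set of points of F \ {x} that can be joined to phi_om(F) by a
   connected subset of some E_k(x).  Cells of high level containing a point
   y <> x miss x, and the points of F near y share such a cell with y, so
   membership in A is locally constant on F \ {x}: A is relatively clopen, and
   every connected subset of F \ {x} meeting A lies in A.  A contains phi_om(F),
   whereas a connected set in E_k(x) reaching phi_ta(F) would put both cells in
   one component of E_(n+p)(x), against well separation. *)

Section LocallyConstant.
Context {T : topologicalType} {S A : set T}.
Hypothesis AS : A `<=` S.
Hypothesis A_loc : forall y, S y ->
  exists V, [/\ open V, V y & forall a, S a -> V a -> (A a <-> A y)].

Lemma connected_subset_locally_constant K :
  connected K -> K `<=` S -> K `&` A !=set0 -> K `<=` A.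
Proof.
move=> cK KS KA.
set C1 := \bigcup_(V in [set V | open V /\ S `&` V `<=` A]) V.
set C2 := ~` \bigcup_(V in [set V | open V /\ S `&` V `<=` ~` A]) V.
have AC1 : A = S `&` C1.
  apply/seteqP; split=> [a Aa|a [Sa [V [_ HV] Va]]]; last exact: HV.
  have [V [oV Va HV]] := A_loc a (AS a Aa).
  by split; [exact: AS | exists V => //; split => // b [Sb Vb]; apply/(HV b Sb Vb)].
have AC2 : A = S `&` C2.
  apply/seteqP; split=> [a Aa|a [Sa nU]].
    by split; [exact: AS | move=> [V [_ HV] Va]; exact: HV a (conj (AS a Aa) Va) Aa].
  apply: contrapT => nAa; apply: nU; have [V [oV Va HV]] := A_loc a Sa.
  by exists V => //; split => // b [Sb Vb] /(HV b Sb Vb).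
have KA1 : K `&` A = K `&` C1 by rewrite AC1 setIA (setIidl KS).
have KA2 : K `&` A = K `&` C2 by rewrite AC2 setIA (setIidl KS).
have oC1 : open C1 by apply: bigcup_open => V [].
have cC2 : closed C2 by rewrite closedC; apply: bigcup_open => V [].
have KAK := cK (K `&` A) KA (ex_intro2 _ _ C1 oC1 KA1) (ex_intro2 _ _ C2 cC2 KA2).
by move=> b Kb; have [] : (K `&` A) b by rewrite KAK.
Qed.

Lemma locally_constant_separates (B C : set T) :
  connected B -> B !=set0 -> B `<=` A ->
  connected C -> C !=set0 -> C `<=` S -> (forall c, C c -> ~ A c) ->
  in_different_components S B C /\ ~ connected S.
Proof.
move=> cB [b Bb] BA cC [c Cc] CS CA.
have BS : B `<=` S := subset_trans BA AS.
have Sb := BS b Bb.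
have SA : S `&` A !=set0 by exists b; split; [|exact: BA].
split; last first.
  move=> cS; apply: (CA c Cc).
  exact: connected_subset_locally_constant cS (@subset_refl _ S) SA c (CS c Cc).
exists b, c; split => //; [exact: connected_component_max | exact: connected_component_max|].
move=> same; apply: (CA c Cc).
apply: (@connected_subset_locally_constant (connected_component S b)).
- exact: component_connected.
- exact: connected_component_sub.
- by exists b; split; [exact: connected_component_refl | exact: BA].
- by rewrite same; exact: connected_component_refl (CS c Cc).
Qed.

End LocallyConstant.

Lemma gsc_phiw_cat (R : realType) N (w s : seq ('I_N * 'I_N)) (p : R * R) :
  gsc_phiw (w ++ s) p = gsc_phiw w (gsc_phiw s p).
Proof. by elim: w => //= i w ->. Qed.

Lemma gsc_phi_sub (R : realType) N (i : 'I_N * 'I_N) (p q : R * R) :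
  gsc_phi i p - gsc_phi i q = N%:R^-1 *: (p - q).
Proof. by rewrite /gsc_phi; congr pair => /=; rewrite -[_ *: _]/(_ * _); ring. Qed.

Lemma gsc_phiw_sub (R : realType) N (w : seq ('I_N * 'I_N)) (p q : R * R) :
  gsc_phiw w p - gsc_phiw w q = (N%:R ^+ size w)^-1 *: (p - q).
Proof.
elim: w => [|i w IH] /=; first by rewrite expr0 invr1 scale1r.
by rewrite gsc_phi_sub IH scalerA exprS invfM.
Qed.

Lemma gsc_phi_continuous (R : realType) N (i : 'I_N * 'I_N) :
  continuous (@gsc_phi R N i).
Proof.
have -> : @gsc_phi R N i = fun p => N%:R^-1 *: (p + ((i.1 : nat)%:R, (i.2 : nat)%:R)).
  by apply: funext => p; rewrite /gsc_phi; congr pair => /=; rewrite mulrC.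
by move=> p; apply: cvgZl_tmp; apply: cvgD; [exact: cvg_id | exact: cvg_cst].
Qed.

Lemma gsc_phiw_continuous (R : realType) N (w : seq ('I_N * 'I_N)) :
  continuous (@gsc_phiw R N w).
Proof.
elim: w => [|i w IH] p /=; first exact: cvg_id.
exact/(continuous_comp (IH p))/gsc_phi_continuous.
Qed.

Lemma finite_words (T : finType) k : finite_set [set w : seq T | size w = k].
Proof.
apply: (@sub_finite_set _ _ ((fun t : k.-tuple T => tval t) @` setT)).
  by move=> w /= hw; exists (Tuple (introT eqP hw)).
exact/finite_image/finite_finset.
Qed.

Section Carpet.
Context {R : realType} {N : nat} {D : {set 'I_N * 'I_N}} {F : set (R * R)}.
Hypothesis F_attr : gsc_attractor D F.

Local Notation word := (seq ('I_N * 'I_N)).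
Local Notation cell w := (gsc_phiw w @` F).

Lemma gsc_attractor_phiw (w : word) p :
  all (fun i => i \in D) w -> F p -> F (gsc_phiw w p).
Proof.
have [_ [_ FE]] := F_attr.
elim: w => [|i w IH] //= /andP[iD wD] Fp.
by rewrite FE; exists i => //; exists (gsc_phiw w p); [exact: IH|].
Qed.

Lemma gsc_attractor_cover k {c} : F c ->
  exists s d, [/\ gsc_word D k s, F d & c = gsc_phiw s d].
Proof.
have [_ [_ FE]] := F_attr.
elim: k c => [|k IH] c Fc; first by exists [::], c.
move: Fc; rewrite {1}FE => -[i iD [d Fd <-]].
have [s [e [[ss sD] Fe ->]]] := IH d Fd.
by exists (i :: s), e; split => //; split; rewrite /= ?ss ?iD.
Qed.

Lemma gsc_E_sub k x : gsc_E D F k x `<=` F `\ x.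
Proof.
move=> b [w [wk nO] [c Fc <-]]; split; first exact: gsc_attractor_phiw wk.2 Fc.
by move=> bx; apply: nO; split => //; exists c.
Qed.

Lemma cell_sub_gsc_E {k x w} j : gsc_word D k w -> ~ cell w x ->
  cell w `<=` gsc_E D F (k + j) x.
Proof.
move=> [wk wD] nx b [c Fc <-].
have [s [d [[ss sD] Fd ->]]] := gsc_attractor_cover j Fc.
exists (w ++ s); last by exists d; rewrite ?gsc_phiw_cat.
split; first by split; [rewrite size_cat wk ss | rewrite all_cat wD sD].
move=> [_ [e Fe ex]]; apply: nx; exists (gsc_phiw s e).
  exact: gsc_attractor_phiw sD Fe.
by rewrite -gsc_phiw_cat.
Qed.

Lemma gsc_E_mono k k' x : (k <= k')%N -> gsc_E D F k x `<=` gsc_E D F k' x.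
Proof.
move=> kk' b [w [wk nO] wb].
have := cell_sub_gsc_E (k' - k) wk (fun wx => nO (conj wk wx)) _ wb.
by rewrite subnKC.
Qed.

Lemma closed_gsc_cells k (P : word -> Prop) :
  closed (\bigcup_(w in [set w | gsc_word D k w /\ P w]) cell w).
Proof.
apply: closed_bigcup; first by apply: sub_finite_set (finite_words _ k) => w [[]].
move=> w _; apply: compact_closed; first exact: norm_hausdorff.
apply: continuous_compact; first exact/continuous_subspaceT/gsc_phiw_continuous.
exact: F_attr.2.1.
Qed.

(* The complement of the level-k cells missing y is an open neighbourhood of y. *)
Lemma gsc_cell_nbhd k {y} : F y -> exists V, [/\ open V, V y &
  forall a, F a -> V a -> exists2 w, gsc_word D k w & cell w a /\ cell w y].
Proof.
move=> Fy; exists (~` \bigcup_(w in [set w | gsc_word D k w /\ ~ cell w y]) cell w).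
split; [by rewrite openC; apply: closed_gsc_cells | by move=> [w [_ ny] wy] |].
move=> a Fa Va; have [s [d [sk Fd ad]]] := gsc_attractor_cover k Fa.
exists s => //; split; first by exists d.
by apply: contrapT => ny; apply: Va; exists s => //; exists d.
Qed.

Hypothesis N_gt1 : (2 <= N)%N.

Lemma gsc_cells_separate_points {x y} : F y -> y <> x ->
  exists m, forall w : word, (m <= size w)%N -> cell w y -> ~ cell w x.
Proof.
move=> Fy yx.
have [M FM] : exists M : R, forall p, F p -> `|p| <= M.
  have [M [_ HM]] := compact_bounded F_attr.2.1.
  by exists (M + 1) => p Fp; apply: (HM (M + 1)) => //; rewrite ltrDl.
have d0 : 0 < `|y - x| by rewrite normr_gt0 subr_eq0; apply/eqP.
exists (Num.truncn (2 * M / `|y - x|)).+1 => w mw [p Fp yp] [q Fq xq].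
set K : R := N%:R ^+ size w.
have K0 : 0 < K by rewrite exprn_gt0 // ltr0n (ltnW N_gt1).
have MK : 2 * M < K * `|y - x|.
  rewrite -ltr_pdivrMr //; apply: lt_le_trans (truncnS_gt _) _.
  by rewrite /K -natrX ler_nat (leq_trans mw) // ltnW // ltn_expl.
have dK : `|y - x| * K = `|p - q|.
  rewrite -yp -xq gsc_phiw_sub normrZ normfV (ger0_norm (ltW K0)).
  by rewrite -/K [K^-1 * _]mulrC mulfVK // gt_eqF.
have := ler_normB p q; have := FM p Fp; have := FM q Fq.
by rewrite mulrC in MK; lra.
Qed.

Hypothesis F_connected : connected F.

Lemma connected_gsc_cell (w : word) : connected (cell w).
Proof.
apply: connected_continuous_connected F_connected _.
exact/continuous_subspaceT/gsc_phiw_continuous.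
Qed.

Variable x : R * R.

Definition gsc_reach (W : set (R * R)) : set (R * R) :=
  [set a | exists k K, [/\ connected K, K `<=` gsc_E D F k x, K `&` W !=set0 & K a]].

Lemma gsc_reach_sub W : gsc_reach W `<=` F `\ x.
Proof. by move=> a [k [K [_ KE _ Ka]]]; exact: gsc_E_sub (KE a Ka). Qed.

Lemma gsc_reach_cell W m (w : word) u v : gsc_word D m w -> ~ cell w x ->
  cell w u -> cell w v -> gsc_reach W u -> gsc_reach W v.
Proof.
move=> wm wx wu wv [k [K [cK KE KW Ku]]].
exists (maxn k m), (K `|` cell w); split.
- by apply: connectedU; [exists u | | exact: connected_gsc_cell].
- move=> b [Kb|wb]; first exact: gsc_E_mono (leq_maxl k m) _ (KE b Kb).
  by have := cell_sub_gsc_E (maxn k m - m) wm wx _ wb; rewrite subnKC // leq_maxr.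
- by case: KW => z [Kz Wz]; exists z; split => //; left.
- by right.
Qed.

Lemma gsc_reach_locally_constant W y : (F `\ x) y -> exists V, [/\ open V, V y &
  forall a, (F `\ x) a -> V a -> (gsc_reach W a <-> gsc_reach W y)].
Proof.
move=> [Fy yx]; have [m mx] := gsc_cells_separate_points Fy yx.
have [V [oV Vy Vcell]] := gsc_cell_nbhd m Fy.
exists V; split => // a [Fa _] Va; have [w wm [wa wy]] := Vcell a Fa Va.
have wx : ~ cell w x by apply: mx wy; rewrite wm.1.
by split; apply: gsc_reach_cell wm wx _ _.
Qed.

Lemma gsc_cell_sub_reach {n} {w : word} : gsc_word D n w -> ~ cell w x ->
  cell w `<=` gsc_reach (cell w).
Proof.
move=> wn wx a wa; exists (n + 0)%N, (cell w).
by split => //; [exact: connected_gsc_cell | exact: cell_sub_gsc_E | exists a].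
Qed.

Lemma well_separated_reach {n} {om ta : word} : well_separated D F x n om ta ->
  forall a, cell ta a -> ~ gsc_reach (cell om) a.
Proof.
move=> [omn omx tan tax sep] a taa [k [K [cK KE [z [Kz omz]]] Ka]].
set q := (maxn k (n + 1) - n)%N.
have q1 : (1 <= q)%N by rewrite subn_gt0 leq_max addn1 leqnn orbT.
have nq : (n + q = maxn k (n + 1))%N by rewrite subnKC // leq_max leq_addr orbT.
have [y [t [omy tat omC taC CC]]] := sep q q1.
set E := gsc_E D F (n + q) x.
have omE : cell om `<=` E := cell_sub_gsc_E q omn (fun h => omx (conj omn h)).
have taE : cell ta `<=` E := cell_sub_gsc_E q tan (fun h => tax (conj tan h)).
have KE' : K `<=` E.
  by move=> b Kb; rewrite /E nq; exact: gsc_E_mono (leq_maxl _ _) _ (KE b Kb).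
have cU : connected (cell om `|` (K `|` cell ta)).
  apply: connectedU; [by exists z; split; [|left] | exact: connected_gsc_cell |].
  by apply: connectedU; [exists a | | exact: connected_gsc_cell].
have UE : cell om `|` (K `|` cell ta) `<=` E by move=> b [|[|]]; auto.
apply: CC; apply: same_connected_component.
exact: connected_component_max (or_introl omy) UE cU t (or_intror (or_intror tat)).
Qed.

End Carpet.

Arguments gsc_reach {R N} D F x W.

Theorem mainTheorem16 (R : realType) (N : nat) (D : {set 'I_N * 'I_N})
  (F : set (R * R)) (x : R * R) (n : nat) (om ta : seq ('I_N * 'I_N)) :
  (2 <= N)%N -> (1 < #|D|)%N -> (#|D| < N ^ 2)%N ->
  gsc_attractor D F -> connected F ->
  F x -> (1 <= n)%N ->
  well_separated D F x n om ta ->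
  in_different_components (F `\ x) (gsc_phiw om @` F) (gsc_phiw ta @` F)
  /\ ~ connected (F `\ x).
Proof.
move=> N_gt1 _ _ F_attr F_conn _ _ sep.
have [omn omx tan tax _] := sep.
have [[y Fy] _] := F_attr.
have om_sub := gsc_cell_sub_reach F_attr F_conn x omn (fun h => omx (conj omn h)).
have ta_sub : gsc_phiw ta @` F `<=` F `\ x.
  exact: subset_trans (cell_sub_gsc_E F_attr 0 tan (fun h => tax (conj tan h)))
    (gsc_E_sub F_attr _ _).
apply: (locally_constant_separates (gsc_reach_sub F_attr x _)
  (gsc_reach_locally_constant F_attr N_gt1 F_conn x _) _ _
  (connected_gsc_cell F_conn om) _ om_sub (connected_gsc_cell F_conn ta) _ ta_sub
  (well_separated_reach F_attr F_conn x sep)).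
- by exists (gsc_phiw om y), y.
- by exists (gsc_phiw ta y), y.
Qed.
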